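(* Let $\mathscr{T}$ be a connected spanning set of pure states in a finite-dimensional Hilbert space $\mathcal{H}$. Then any maximal connected linearly independent set contained in $\mathscr{T}$ is a connected basis of $\mathcal{H}$.
   Context: The transition graph of a set $\mathscr{T}=\{|\psi_j\rangle\}$ of pure states has vertices the states, with two distinct vertices adjacent iff their inner product is nonzero; $\mathscr{T}$ is connected if this graph is connected. A connected spanning set is a connected set spanning $\mathcal{H}$; a connected linearly independent set (CLIS) is a connected, linearly independent set; a connected basis is a CLIS spanning $\mathcal{H}$. A CLIS contained in $\mathscr{T}$ is maximal if it is not properly contained in any other CLIS contained in $\mathscr{T}$. *)

(* The finite-dimensional Hilbert space H is modelled as
   C^n (column vectors 'cV[C]_n) with the standard inner product
   <u|v> = \sum_i conj(u_i) v_i, over an arbitrary numClosedFieldType C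
   (which includes the complex numbers). *)
From HB Require Import structures.
From mathcomp Require Import all_boot all_order all_algebra.
Set Implicit Arguments. Unset Strict Implicit. Unset Printing Implicit Defensive.
Import Order.TTheory GRing.Theory Num.Theory.
Local Open Scope ring_scope.

Section QDefs.
Variables (C : numClosedFieldType) (n : nat).
Notation vec := 'cV[C]_n.

Definition inner (u v : vec) : C := \sum_(i < n) (u i 0)^* * v i 0.

Definition adj (u v : vec) : bool := (u != v) && (inner u v != 0).

Definition qset := vec -> Prop.

Definition subqset (A B : qset) : Prop := forall x, A x -> B x.

Definition pure_states (S : qset) : Prop := forall x, S x -> inner x x = 1.

Definition connected (S : qset) : Prop :=
  forall u v, S u -> S v ->
    exists s : seq vec, (forall x, x \in s -> S x) /\ path adj u s /\ last u s = v.

Definition lin_indep (S : qset) : Prop :=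
  forall s : seq vec, uniq s -> (forall x, x \in s -> S x) -> free s.

Definition spanning (S : qset) : Prop :=
  exists s : seq vec, (forall x, x \in s -> S x) /\ (<<s>>%VS = fullv).

Definition connected_spanning_set (S : qset) : Prop := connected S /\ spanning S.
Definition CLIS (S : qset) : Prop := connected S /\ lin_indep S.
Definition connected_basis (S : qset) : Prop := CLIS S /\ spanning S.

Definition maximal_CLIS_in (T B : qset) : Prop :=
  subqset B T /\ CLIS B /\
  forall B' : qset, subqset B B' -> subqset B' T -> CLIS B' -> subqset B' B.

End QDefs.

(* Let s enumerate the maximal CLIS B (it is finite, being linearly
   independent).  If s did not span H, some state of the spanning set T would
   lie outside <<s>>, and a path in the transition graph of T from a point of
   B to that state would contain an edge from a vector y of <<s>> to a state
   z of T outside <<s>>.  Since <z|y> <> 0 and y is a combination of s, z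
   overlaps some element of B.  Then B together with z is still connected
   and, z being outside <<s>>, still linearly independent, contradicting
   maximality. *)
From mathcomp Require Import all_boot all_order all_algebra.
From Stdlib Require Import Classical.
Set Implicit Arguments. Unset Strict Implicit. Unset Printing Implicit Defensive.
Import Order.TTheory GRing.Theory Num.Theory.
Local Open Scope ring_scope.

Lemma bounded_uniq_enum (T : eqType) (P : T -> Prop) (k : nat) :
  (forall s, uniq s -> (forall x, x \in s -> P x) -> (size s <= k)%N) ->
  exists s, [/\ uniq s, forall x, x \in s -> P x & forall x, P x -> x \in s].
Proof.
move=> size_le; apply: NNPP => no_enum.
have long m : exists s, [/\ uniq s, forall x, x \in s -> P x & size s = m].
  elim: m => [|m [s [uniq_s sP size_s]]]; first by exists [::].
  have [x not_enum_x] : exists x, ~ (P x -> x \in s).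
    by apply: not_all_ex_not => s_enum; apply: no_enum; exists s.
  have [Px xs] := imply_to_and _ _ not_enum_x.
  exists (x :: s); split; last by rewrite /= size_s.
    by rewrite /= uniq_s andbT; apply/negP.
  by move=> y; rewrite inE => /predU1P [->|/sP].
have [s [uniq_s sP size_s]] := long k.+1.
by have := size_le s uniq_s sP; rewrite size_s ltnn.
Qed.

Lemma path_exit (T : eqType) (e : rel T) (a : pred T) x p :
  a x -> ~~ a (last x p) -> path e x p ->
  exists y z, [/\ a y, ~~ a z, z \in p & e y z].
Proof.
elim: p x => [|x' p IHp] x /= ax; first by rewrite ax.
move=> a_last /andP [e_xx' path_p].
have [ax' | nax'] := boolP (a x'); last by exists x, x'; rewrite mem_head.
have [y [z [ay naz zp eyz]]] := IHp x' ax' a_last path_p.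
by exists y, z; rewrite inE zp orbT.
Qed.

Section TransitionGraph.
Variables (C : numClosedFieldType) (n : nat).
Local Notation vec := 'cV[C]_n.
Local Notation adj := (@adj C n).

Lemma conjC_inner (u v : vec) : (inner u v)^* = inner v u.
Proof.
rewrite /inner rmorph_sum; apply: eq_bigr => i _.
by rewrite rmorphM mulrC; congr (_ * _); exact: conjCK.
Qed.

Lemma adj_sym (u v : vec) : adj u v = adj v u.
Proof. by rewrite /adj eq_sym -conjC_inner conjC_eq0. Qed.

Lemma inner_span0 (z : vec) (s : seq vec) y :
  (forall b, b \in s -> inner z b = 0) -> y \in <<s>>%VS -> inner z y = 0.
Proof.
move=> z_orth_s /(coord_span (X := in_tuple s)) ->.
rewrite /inner; under eq_bigr do rewrite summxE mulr_sumr.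
rewrite exchange_big big1 // => i _.
under eq_bigr do rewrite mxE mulrCA.
by rewrite -mulr_sumr -/(inner z s`_i) z_orth_s ?mulr0 ?mem_nth.
Qed.

Lemma adj_span_exit (s : seq vec) y z :
  y \in <<s>>%VS -> z \notin <<s>>%VS -> adj y z -> exists2 b, b \in s & adj b z.
Proof.
move=> ys zs /andP [_ yz]; apply: NNPP => no_b; move: yz.
rewrite -conjC_inner conjC_eq0 (inner_span0 _ ys) ?eqxx // => b bs.
apply/eqP/negPn/negP => zb; apply: no_b; exists b => //.
rewrite adj_sym /adj zb andbT; apply: contraNneq zs => ->.
exact: memv_span.
Qed.

Lemma connected_exit (T : qset C n) (U : {vspace vec}) x t :
  connected T -> T x -> T t -> x \in U -> t \notin U ->
  exists y z, [/\ T z, y \in U, z \notin U & adj y z].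
Proof.
move=> connT Tx Tt xU tU; have [p [pT [path_p last_p]]] := connT x t Tx Tt.
rewrite -last_p in tU; have [y [z [yU zU zp yz]]] := path_exit xU tU path_p.
by exists y, z; split=> //; apply: pT.
Qed.

Lemma size_free_le (s : seq vec) : free s -> (size s <= n)%N.
Proof.
move/eqP <-; apply: leq_trans (dimvS (subvf _)) _.
by rewrite dimvf /= dim_matrix [X in (X <= _)%N]muln1.
Qed.

Lemma lin_indep_enum (B : qset C n) : lin_indep B ->
  exists s, [/\ uniq s, forall x, x \in s -> B x & forall x, B x -> x \in s].
Proof.
move=> indepB; apply: (@bounded_uniq_enum _ _ n) => s uniq_s sB.
exact/size_free_le/indepB.
Qed.

Definition qsetU1 (B : qset C n) (z : vec) : qset C n := fun x => B x \/ x = z.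

Lemma connected_qsetU1 (B : qset C n) z :
  connected B -> ((exists x, B x) -> exists2 b, B b & adj b z) ->
  connected (qsetU1 B z).
Proof.
move=> connB z_adjB u v [Bu|->] [Bv|->]; last by exists [::].
- have [p [pB [path_p last_p]]] := connB u v Bu Bv.
  by exists p; split=> // x /pB; left.
- have [b Bb bz] := z_adjB (ex_intro _ u Bu).
  have [p [pB [path_p last_p]]] := connB u b Bu Bb.
  exists (rcons p z); split; last by rewrite rcons_path path_p last_p bz last_rcons.
  by move=> x; rewrite mem_rcons inE => /predU1P [->|/pB]; [right|left].
- have [b Bb bz] := z_adjB (ex_intro _ v Bv).
  have [p [pB [path_p last_p]]] := connB b v Bb Bv.
  exists (b :: p); split; last by rewrite /= adj_sym bz path_p.
  by move=> x; rewrite inE => /predU1P [->|/pB]; left.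
Qed.

Lemma lin_indep_qsetU1 (B : qset C n) (s : seq vec) z :
  lin_indep B -> (forall x, B x -> x \in s) -> z \notin <<s>>%VS ->
  lin_indep (qsetU1 B z).
Proof.
move=> indepB Bs zs r uniq_r rBz.
have [zr | zr] := boolP (z \in r); last first.
  apply: indepB uniq_r _ => x xr; case: (rBz x xr) => // x_eq.
  by rewrite -x_eq xr in zr.
have remB x : x \in rem z r -> B x.
  rewrite (mem_rem_uniq _ uniq_r) inE => /andP [xz xr].
  by case: (rBz x xr) => // x_eq; rewrite x_eq eqxx in xz.
rewrite (perm_free (perm_to_rem zr)) free_cons (indepB _ (rem_uniq _ uniq_r) remB).
rewrite andbT; apply: contraNN zs; by apply/subvP/sub_span => x /remB /Bs.
Qed.

End TransitionGraph.

Theorem lemma4 (C : numClosedFieldType) (n : nat) (T B : qset C n) :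
  pure_states T -> connected_spanning_set T ->
  maximal_CLIS_in T B -> connected_basis B.
Proof.
move=> _ [connT [t [tT span_t]]] [BT [[connB indepB] maxB]].
have [s [uniq_s sB Bs]] := lin_indep_enum indepB.
split=> //; exists s; split=> //.
apply/eqP; rewrite eqEsubv subvf /= -span_t; apply/span_subvP => t0 t0t.
apply/negPn/negP => t0s.
have [z [Tz zs z_adjB]] : exists z, [/\ T z, z \notin <<s>>%VS &
    (exists x, B x) -> exists2 b, B b & adj b z].
  have [[b0 Bb0] | noB] := classic (exists x, B x); last first.
    by exists t0; split; [exact: tT | exact: t0s | move/noB].
  have [y [z [Tz ys zs yz]]] :=
    connected_exit connT (BT _ Bb0) (tT _ t0t) (memv_span (Bs _ Bb0)) t0s.
  have [b bs bz] := adj_span_exit ys zs yz.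
  by exists z; split=> // _; exists b; first exact: sB.
have CLIS_Bz : CLIS (qsetU1 B z).
  by split; [exact: connected_qsetU1 | exact: lin_indep_qsetU1 Bs zs].
have Bz : B z.
  apply: (maxB (qsetU1 B z)) => //; last by right.
  - by move=> x; left.
  - by move=> x [/BT | ->].
by move: zs; rewrite memv_span ?Bs.
Qed.
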